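(* Let $\lambda>0$, $p\in(0,1)$, $\theta\in(0,1)$. Let $\rho$ be a random variable taking finitely many values $q_1,\dots,q_K\in[0,M_1]$ (some constant $M_1<\infty$) with $P(\rho=q_j)=\mu_j>0$, $\sum_j\mu_j=1$. For each $n\ge1$ let $G_n$ be the Erdős–Rényi graph $G(n,p)$ on $A_n=\{0,\dots,n-1\}$ ($i\sim j$ if the edge is kept), let $\{\rho(i)\}_{i\ge0}$ be i.i.d. copies of $\rho$ independent of the graphs, and let $\{X^{(n)}_t\}_{t\ge0}$ be the SIR process on $G_n$ with states $\{0,1,-1\}^{A_n}$: state $-1$ is permanent; a vertex $i$ in state $0$ at time $t$ jumps to $1$ at rate $\frac{\lambda}{n}\sum_{j}\rho(i)\rho(j)\mathbf{1}_{\{j\sim i,X_t(j)=1\}}$; a vertex in state $1$ jumps to $-1$ at rate $1$. The initial states $X^{(n)}_0(i)$ are i.i.d. (independent of graph and weights) with $P(X^{(n)}_0(0)=1)=\theta=1-P(X^{(n)}_0(0)=0)$. For $1\le j\le K$ let $S^{(n)}_t(j)=\mathrm{card}\{i: X^{(n)}_t(i)=0,\rho(i)=q_j\}$ and $I^{(n)}_t(j)=\mathrm{card}\{i: X^{(n)}_t(i)=1,\rho(i)=q_j\}$, and for $1\le j,l\le K$ let $L^{(n)}_t(j,l)$ be the number of edges of $G_n$ joining a vertex that is susceptible (state $0$) with weight $q_j$ at time $t$ to a vertex that is infective (state $1$) with weight $q_l$ at time $t$. Then for any $1\le j,l\le K$ and $t\ge0$, $$\lim_{n\to\infty}\frac{\sup_{0\le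 u\le t}\big|L^{(n)}_u(j,l)-p\,S^{(n)}_u(j)\,I^{(n)}_u(l)\big|}{n^2}=0$$ in probability. *)

From HB Require Import structures.
From mathcomp Require Import all_boot all_order all_algebra.
From mathcomp Require Import all_classical all_reals all_analysis.
Set Implicit Arguments. Unset Strict Implicit. Unset Printing Implicit Defensive.
Import Order.TTheory GRing.Theory Num.Theory.
Local Open Scope classical_set_scope.
Local Open Scope ring_scope.

(* Vertex states: sS (= 0, susceptible), sI (= 1, infective), sR (= -1, removed). *)
Definition sS : 'I_3 := @Ordinal 3 0 isT.
Definition sI : 'I_3 := @Ordinal 3 1 isT.
Definition sR : 'I_3 := @Ordinal 3 2 isT.

Definition config (n : nat) := {ffun 'I_n -> 'I_3}.
Definition graph (n : nat) := {ffun 'I_n * 'I_n -> bool}.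
(* weights: index j of the value q_j taken by rho(i) *)
Definition weights (n K : nat) := {ffun 'I_n -> 'I_K}.

Section Defs.
Variable R : realType.

Definition upd n (x : config n) (i : 'I_n) (s : 'I_3) : config n :=
  [ffun k => if k == i then s else x k].

Definition ER_law n (p : R) (a : graph n) : R :=
  if [forall i, ~~ a (i, i)] && [forall i, forall j, a (i, j) == a (j, i)]
  then \prod_(ij : 'I_n * 'I_n | (ij.1 < ij.2)%N) (if a ij then p else 1 - p)
  else 0.

Definition weights_law n K (mu : 'I_K -> R) (r : weights n K) : R :=
  \prod_i mu (r i).

Definition init_law n (theta : R) (x : config n) : R :=
  \prod_i (if x i == sI then theta else if x i == sS then 1 - theta else 0).

Definition inf_rate n K (lam : R) (q : 'I_K -> R) (a : graph n) (r : weights n K)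
  (x : config n) (i : 'I_n) : R :=
  lam / n%:R * \sum_(j : 'I_n) (q (r i) * q (r j) *
      (if a (i, j) && (x j == sI) then 1 else 0)).

Definition SIR_off n K lam q (a : graph n) (r : weights n K) (x y : config n) : R :=
  \sum_(i : 'I_n)
    ((if (x i == sS) && (y == upd x i sI) then inf_rate lam q a r x i else 0)
   + (if (x i == sI) && (y == upd x i sR) then 1 else 0)).

Definition SIR_Q n K lam q (a : graph n) (r : weights n K) (x y : config n) : R :=
  if x == y then - \sum_(z | z != x) SIR_off lam q a r x z
  else SIR_off lam q a r x y.

Fixpoint Qpow (C : finType) (Q : C -> C -> R) (k : nat) (x y : C) : R :=
  match k with
  | 0 => if x == y then 1 else 0
  | k'.+1 => \sum_z Qpow Q k' x z * Q z y
  end.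

Definition trans (C : finType) (Q : C -> C -> R) (t : R) (x y : C) : R :=
  limn (fun N => \sum_(k < N) (t ^+ k / (k`!)%:R * Qpow Q k x y)).

Fixpoint fdd_prod (C : finType) (Q : C -> C -> R) (t : R) (x : C)
  (l : seq (R * C)) : R :=
  match l with
  | [::] => 1
  | (s, y) :: l' => trans Q (s - t) x y * fdd_prod Q s y l'
  end.

(* (G, rho, X) on the probability space (Omega, P) is the model of the paper:
   Erdos-Renyi graph, independent i.i.d. weights, independent i.i.d. initial
   states, and, given graph and weights, X is the continuous-time Markov chain
   with the SIR rates (finite-dimensional distributions given by exp(tQ)),
   with cadlag (piecewise constant) paths. *)
Definition is_SIR_model (d : measure_display) (Omega : measurableType d)
  (P : probability Omega R) (n K : nat) (lam p theta : R) (q mu : 'I_K -> R)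
  (G : Omega -> graph n) (rho : Omega -> weights n K)
  (X : Omega -> R -> config n) : Prop :=
  [/\ (forall a, measurable [set w | G w = a]),
      (forall r, measurable [set w | rho w = r]) /\
      (forall t c, measurable [set w | X w t = c]),
      (* cadlag paths with values in a finite set *)
      (forall w s, 0 <= s -> (exists e : R, 0 < e /\
          forall u, s <= u < s + e -> X w u = X w s)),
      (forall w s, 0 < s -> (exists e : R, 0 < e /\
          forall u u', s - e < u < s -> s - e < u' < s -> X w u = X w u')) &
      (forall a r x0 (l : seq (R * config n)),
          path (fun u v => u.1 <= v.1) (0, x0) l ->
          P [set w | [/\ G w = a, rho w = r, X w 0 = x0 &
                        all (fun sy => X w sy.1 == sy.2) l]]
          = (ER_law p a * weights_law mu r * init_law theta x0
             * fdd_prod (SIR_Q lam q a r) 0 x0 l)%:E)].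

Definition S_count n K (q : 'I_K -> R) (r : weights n K) (x : config n) (j : 'I_K) : nat :=
  #|[set i | (x i == sS) && (q (r i) == q j)]|.
Definition I_count n K (q : 'I_K -> R) (r : weights n K) (x : config n) (j : 'I_K) : nat :=
  #|[set i | (x i == sI) && (q (r i) == q j)]|.
(* each edge joining a susceptible and an infective vertex is counted once,
   through the ordered pair (susceptible end, infective end) *)
Definition L_count n K (q : 'I_K -> R) (a : graph n) (r : weights n K) (x : config n)
  (j l : 'I_K) : nat :=
  #|[set ik : 'I_n * 'I_n | [&& a ik, x ik.1 == sS, q (r ik.1) == q j,
                               x ik.2 == sI & q (r ik.2) == q l]]|.

End Defs.

(* For disjoint vertex sets A and B, the number of edges of G(n,p) from A to B
   minus p |A| |B| is a sum of at most n^2 independent centred Bernoulli(p)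
   variables, so by a Chernoff bound it exceeds eps n^2 in absolute value with
   probability at most 2 exp (- eps^2 n^2 / 8).  A union bound over the 4^n pairs
   (A, B) keeps this below 4^n 2 exp (- eps^2 n^2 / 8) -> 0 uniformly in (A, B).
   At every time u, L_u(j,l) - p S_u(j) I_u(l) is exactly this deviation for the
   disjoint sets of weight-q_j susceptibles and weight-q_l infectives, so the
   supremum over [0, t] is large only on this event of the graph alone, whatever
   the dynamics of the epidemic. *)

From HB Require Import structures.
From mathcomp Require Import all_boot all_order all_algebra.
From mathcomp Require Import all_classical all_reals all_analysis.
From mathcomp Require Import ring lra.
Set Implicit Arguments. Unset Strict Implicit. Unset Printing Implicit Defensive.
Import Order.TTheory GRing.Theory Num.Theory.
Local Open Scope ring_scope.

Section ExpBounds.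
Variable R : realType.

Lemma expR_le_quadratic (t : R) : `|t| <= 1/2 -> expR t <= 1 + t + 2 * t ^+ 2.
Proof.
rewrite ler_norml => /andP[ht1 ht2].
have expRNt : 1 - t <= expR (- t) by have := expR_ge1Dx (- t).
have expRtNt : expR t * expR (- t) = 1 by rewrite -expRD subrr expR0.
have expR_1Bt : expR t * (1 - t) <= 1.
  by rewrite -[leRHS]expRtNt ler_pM2l ?expR_gt0.
have le1_quadratic : 1 <= (1 - t) * (1 + t + 2 * t ^+ 2).
  have -> : (1 - t) * (1 + t + 2 * t ^+ 2) = 1 + t ^+ 2 * (1 - 2 * t) by ring.
  by rewrite lerDl mulr_ge0 ?sqr_ge0 //; lra.
rewrite -(@ler_pM2r _ (1 - t)); last lra.
by apply: le_trans expR_1Bt _; rewrite mulrC.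
Qed.

Lemma centered_bernoulli_mgf_le (p t : R) : 0 <= p <= 1 -> `|t| <= 1/2 ->
  p * expR (t * (1 - p)) + (1 - p) * expR (- (t * p)) <= expR (2 * t ^+ 2).
Proof.
move=> /andP[p0 p1] ht.
have -> : p * expR (t * (1 - p)) + (1 - p) * expR (- (t * p))
    = expR (- (t * p)) * (1 + p * (expR t - 1)).
  have -> : t * (1 - p) = t + - (t * p) by ring.
  rewrite expRD; ring.
have mix_le : 1 + p * (expR t - 1) <= expR (p * (t + 2 * t ^+ 2)).
  apply: le_trans (expR_ge1Dx _); rewrite lerD2l ler_wpM2l //.
  by have := expR_le_quadratic ht; lra.
apply: le_trans (ler_wpM2l (expR_ge0 _) mix_le) _.
rewrite -expRD ler_expR.
have : p * (2 * t ^+ 2) <= 2 * t ^+ 2 by rewrite ler_piMl // mulr_ge0 // sqr_ge0.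
lra.
Qed.

Lemma sum_gt_le_expR (I : finType) (f g : I -> R) (s c : R) :
  (forall i, 0 <= f i) -> 0 <= s ->
  \sum_(i | c < g i) f i <= \sum_i f i * expR (s * (g i - c)).
Proof.
move=> f_ge0 s0; rewrite big_mkcond /=; apply: ler_sum => i _.
case: ifP => g_gt; last by rewrite mulr_ge0 ?expR_ge0.
apply: ler_peMr => //; apply: le_trans (expR_ge1Dx _).
by rewrite lerDl mulr_ge0 // subr_ge0 ltW.
Qed.

End ExpBounds.

Definition upper n (u : 'I_n * 'I_n) : bool := (u.1 < u.2)%N.

Definition simple_graph n (a : graph n) : bool :=
  [forall i, ~~ a (i, i)] && [forall i, forall j, a (i, j) == a (j, i)].

Definition sym_graph n (f : graph n) : graph n :=
  [ffun u => if upper u then f u else if upper (u.2, u.1) then f (u.2, u.1) else false].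

Definition upper_restr n (a : graph n) : graph n :=
  [ffun u => if upper u then a u else false].

Lemma sym_graph_restr n (a : graph n) : simple_graph a -> sym_graph (upper_restr a) = a.
Proof.
case/andP => /forallP irr /forallP sym; apply/ffunP => -[i j].
rewrite !ffunE /upper /=; case: ltngtP => h //=.
  by have /forallP/(_ i)/eqP := sym j.
by move: h => /val_inj ->; have := irr j; case: (a (j, j)).
Qed.

Lemma simple_sym_graph n (f : graph n) : simple_graph (sym_graph f).
Proof.
apply/andP; split; first by apply/forallP => i; rewrite ffunE /upper /= ltnn.
by apply/forallP => i; apply/forallP => j; rewrite !ffunE /upper /=; case: ltngtP.
Qed.

Lemma sym_graph_upper n (f : graph n) u : upper u -> sym_graph f u = f u.
Proof. by rewrite ffunE => ->. Qed.

Lemma upper_restr_sym_graphE n (f : graph n) :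
  (upper_restr (sym_graph f) == f) = (f \in pfamily false (@upper n) (fun _ => predT)).
Proof.
apply/eqP/familyP => [<- u | f_upper].
  by rewrite !ffunE -[u \in _]/(upper u); case: ifP => // _; rewrite inE.
apply/ffunP => u; rewrite !ffunE; have := f_upper u; rewrite -[u \in _]/(upper u).
by case: ifP => // _; rewrite inE => /eqP.
Qed.

Section ErdosRenyi.
Variable R : realType.

Lemma sum_pairs_upper n (F : 'I_n * 'I_n -> R) :
  \sum_u F u = \sum_(u | upper u) (F u + F (u.2, u.1)) + \sum_(u | u.1 == u.2) F u.
Proof.
rewrite (bigID (@upper n)) /= big_split /= -addrA; congr (_ + _).
rewrite (bigID (fun u : 'I_n * 'I_n => u.1 == u.2)) /= addrC; congr (_ + _).
  have swap_inj : injective (fun u : 'I_n * 'I_n => (u.2, u.1)) by move=> [? ?] [? ?] [-> ->].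
  rewrite (reindex_inj swap_inj); apply: eq_bigl => -[i j] /=; rewrite /upper /=.
  case: ltngtP => //= [i_gt_j | /val_inj ->]; last by rewrite eqxx.
  by apply/eqP => eq_ij; move: i_gt_j; rewrite eq_ij ltnn.
by apply: eq_bigl => u; rewrite /upper; case: eqP => [->|]; rewrite ?ltnn ?andbF.
Qed.

Lemma ER_law_ge0 (p : R) n (a : graph n) : 0 <= p <= 1 -> 0 <= ER_law p a.
Proof.
case/andP => p0 p1; rewrite /ER_law; case: ifP => // _.
by apply: prodr_ge0 => u _; case: (a u); rewrite ?subr_ge0.
Qed.

Lemma ER_law_prod_upper (p : R) n (h : 'I_n * 'I_n -> bool -> R) :
  \sum_a ER_law p a * \prod_(u | upper u) h u (a u)
  = \prod_(u | upper u) (p * h u true + (1 - p) * h u false).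
Proof.
transitivity (\sum_(a | simple_graph a)
    \prod_(u | upper u) ((if a u then p else 1 - p) * h u (a u))).
  rewrite (bigID (@simple_graph n)) /= [X in _ + X]big1 ?addr0.
    by apply: eq_bigr => a sa; rewrite /ER_law -/(simple_graph a) sa big_split.
  by move=> a /negbTE na; rewrite /ER_law -/(simple_graph a) na mul0r.
rewrite (eq_bigr (fun u => \sum_(x : bool) (if x then p else 1 - p) * h u x));
  last by move=> u _; rewrite big_bool.
rewrite (big_distr_big_dep false) /=.
rewrite (reindex_onto (@sym_graph n) (@upper_restr n)) /=; last exact: sym_graph_restr.
apply: eq_big => f; first by rewrite simple_sym_graph upper_restr_sym_graphE.
by move=> _; apply: eq_bigr => u hu; rewrite sym_graph_upper.
Qed.

End ErdosRenyi.

Definition edge_dev (R : pzRingType) (p : R) n (a : graph n) (A B : {set 'I_n}) : R :=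
  \sum_u ((u.1 \in A) && (u.2 \in B))%:R * ((a u)%:R - p).

Section EdgeDeviation.
Variable R : realType.

Lemma edge_dev_upper (p : R) n (a : graph n) (A B : {set 'I_n}) :
  [disjoint A & B] -> simple_graph a ->
  edge_dev p a A B = \sum_(u | upper u)
    ((u.1 \in A) && (u.2 \in B) || (u.2 \in A) && (u.1 \in B))%:R * ((a u)%:R - p).
Proof.
move=> dAB /andP[_ /forallP sym]; rewrite /edge_dev sum_pairs_upper.
rewrite [X in _ + X]big1 ?addr0 => [|[i j] /= /eqP ->]; last first.
  by case jA : (j \in A); rewrite ?(disjointFr dAB jA) mul0r.
apply: eq_bigr => -[i j] _ /=; have /forallP/(_ i)/eqP -> := sym j.
rewrite -mulrDl -natrD; congr (_%:R * _).
by case iA : (i \in A); case jA : (j \in A);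
  rewrite ?(disjointFr dAB iA) ?(disjointFr dAB jA) /= ?addn0 ?orbF.
Qed.

(* Chernoff: Markov's inequality for exp (s * sg * edge_dev), whose expectation
   factorises over the independent edges above the diagonal. *)
Lemma ER_edge_dev_tail (p sg s c : R) n (A B : {set 'I_n}) :
  0 <= p <= 1 -> [disjoint A & B] -> `|sg| <= 1 -> 0 <= s <= 1/2 ->
  \sum_(a | c < sg * edge_dev p a A B) ER_law p a
    <= expR (2 * s ^+ 2 * (n * n)%:R - s * c).
Proof.
move=> p01 dAB sg1 /andP[s0 s_half].
pose w (u : 'I_n * 'I_n) : R :=
  ((u.1 \in A) && (u.2 \in B) || (u.2 \in A) && (u.1 \in B))%:R.
pose h u (x : bool) := expR (s * sg * w u * (x%:R - p)).
have factor : \sum_a ER_law p a * expR (s * (sg * edge_dev p a A B - c))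
    = expR (- (s * c)) * \sum_a ER_law p a * \prod_(u | upper u) h u (a u).
  rewrite mulr_sumr; apply: eq_bigr => a _.
  have [sa|na] := boolP (simple_graph a); last first.
    by rewrite /ER_law -/(simple_graph a) (negbTE na) !mul0r mulr0.
  rewrite mulrCA -expR_sum -expRD edge_dev_upper //; congr (_ * expR _).
  rewrite mulrBr addrC mulrA mulr_sumr; congr (_ + _).
  by apply: eq_bigr => u _; rewrite mulrA.
have factor_le u : upper u -> p * h u true + (1 - p) * h u false <= expR (2 * s ^+ 2).
  move=> _; rewrite /h; set t := s * sg * w u.
  have t_le : `|t| <= s.
    have w01 : 0 <= w u <= 1 by rewrite /w; case: (_ || _); rewrite ?lexx ?ler01.
    rewrite /t !normrM (ger0_norm s0) (ger0_norm (proj1 (andP w01))) -mulrA.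
    by rewrite -[leRHS]mulr1 ler_wpM2l // mulr_ile1 //; case/andP: w01.
  have -> : t * (true%:R - p) = t * (1 - p) by [].
  have -> : t * (false%:R - p) = - (t * p) by rewrite sub0r mulrN.
  apply: le_trans (centered_bernoulli_mgf_le p01 (le_trans t_le s_half)) _.
  have : - s <= t <= s by rewrite -ler_norml.
  by rewrite ler_expR; nra.
apply: le_trans (sum_gt_le_expR _ _ (fun a => ER_law_ge0 a p01) s0) _.
rewrite addrC expRD factor ler_pM2l ?expR_gt0 //.
rewrite ER_law_prod_upper.
apply: (@le_trans _ _ (\prod_(u | upper u) expR (2 * s ^+ 2))).
  apply: ler_prod => u hu; rewrite factor_le // andbT.
  by rewrite addr_ge0 // mulr_ge0 ?expR_ge0 //; lra.
rewrite prodr_const -expRM_natl ler_expR mulrC ler_wpM2l ?mulr_ge0 ?sqr_ge0 // ler_nat.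
by apply: leq_trans (max_card _) _; rewrite card_prod card_ord.
Qed.

End EdgeDeviation.

Lemma card_sets (T : finType) : #|{set T}| = (2 ^ #|T|)%N.
Proof.
rewrite -cardsT -card_powerset; apply: eq_card => A.
by rewrite powersetE finset.subsetT.
Qed.

Section CutDeviation.
Variable R : realType.

Definition cut_dev_gt (p c : R) n (a : graph n) : bool :=
  [exists AB : {set 'I_n} * {set 'I_n},
    [disjoint AB.1 & AB.2] && (c < `|edge_dev p a AB.1 AB.2|)].

Lemma sum_exists_le (I J : finType) (P : I -> J -> bool) (f : J -> R) :
  (forall j, 0 <= f j) ->
  \sum_(j | [exists i, P i j]) f j <= \sum_i \sum_(j | P i j) f j.
Proof.
move=> f_ge0; rewrite (eq_bigr (fun i => \sum_j (if P i j then f j else 0)));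
  last by move=> i _; rewrite big_mkcond.
rewrite exchange_big /= big_mkcond /=; apply: ler_sum => j _.
have summand_ge0 i : 0 <= (if P i j then f j else 0) by case: ifP.
case: existsP => [[i Pij]|_]; last exact: sumr_ge0.
by rewrite (bigD1 i) //= Pij lerDl sumr_ge0.
Qed.

Lemma sum_norm_gt_le (J : finType) (x f : J -> R) (c : R) :
  (forall j, 0 <= f j) ->
  \sum_(j | c < `|x j|) f j <= \sum_(j | c < x j) f j + \sum_(j | c < - x j) f j.
Proof.
move=> f_ge0; rewrite !(big_mkcond (fun j => c < _)) -big_split /=.
apply: ler_sum => j _; rewrite ltr_normr.
by case: (c < x j); case: (c < - x j); rewrite ?addr0 ?add0r ?lerDl.
Qed.

Definition cut_tail_bound (eps : R) n : R :=
  (2 ^ (n + n))%:R * (2 * expR (- (eps ^+ 2 / 8 * (n * n)%:R))).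

Lemma ER_cut_dev_tail (p eps c : R) n :
  0 <= p <= 1 -> 0 < eps <= 1 -> eps * (n * n)%:R <= c ->
  \sum_(a : graph n | cut_dev_gt p c a) ER_law p a <= cut_tail_bound eps n.
Proof.
move=> p01 /andP[eps0 eps1] c_ge.
apply: le_trans (sum_exists_le _ (fun a : graph n => ER_law_ge0 a p01)) _.
rewrite /cut_tail_bound; set y := 2 * _; suff pair_le (AB : {set 'I_n} * {set 'I_n}) :
    \sum_(a | [disjoint AB.1 & AB.2] && (c < `|edge_dev p a AB.1 AB.2|)) ER_law p a <= y.
  apply: le_trans (ler_sum _ (fun AB _ => pair_le AB)) _.
  by rewrite sumr_const card_prod card_sets card_ord -expnD mulr_natl.
case: AB => A B /=; have [dAB|_] := boolP [disjoint A & B]; last first.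
  by rewrite big_pred0 // /y mulr_ge0 ?expR_ge0.
apply: le_trans (sum_norm_gt_le _ _ (fun a : graph n => ER_law_ge0 a p01)) _.
have signed_le sg : `|sg| <= 1 ->
    \sum_(a | c < sg * edge_dev p a A B) ER_law p a <= expR (- (eps ^+ 2 / 8 * (n * n)%:R)).
  move=> sg1; have s01 : 0 <= eps / 4 <= 1/2 by apply/andP; split; lra.
  apply: le_trans (ER_edge_dev_tail c p01 dAB sg1 s01) _.
  have : eps / 4 * (eps * (n * n)%:R) <= eps / 4 * c by rewrite ler_wpM2l //; lra.
  by rewrite ler_expR; nra.
rewrite /y mulr2n mulrDl !mul1r lerD //.
  by under eq_bigl do rewrite -[edge_dev _ _ _ _]mul1r; rewrite signed_le ?normr1.
by under eq_bigl do rewrite -mulN1r; rewrite signed_le ?normrN ?normr1.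
Qed.

End CutDeviation.

Section Counts.
Variable R : realType.

Definition class_set n K (q : 'I_K -> R) (r : weights n K) (x : config n)
    (s : 'I_3) (j : 'I_K) : {set 'I_n} :=
  [set i | (x i == s) && (q (r i) == q j)].

Lemma disjoint_class_set n K (q : 'I_K -> R) (r : weights n K) (x : config n) s s' j l :
  s != s' -> [disjoint class_set q r x s j & class_set q r x s' l].
Proof.
move=> neq_ss'; rewrite -setI_eq0; apply/eqP/setP => i; rewrite !inE.
by case: eqP => [->|] //=; rewrite eq_sym (negbTE neq_ss') andbF.
Qed.

Lemma sum_indicator (T : finType) (b : pred T) : \sum_i ((b i)%:R : R) = #|b|%:R.
Proof.
rewrite -sum1_card natr_sum [RHS]big_mkcond; apply: eq_bigr => i _.
by rewrite -[i \in b]/(b i); case: (b i).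
Qed.

(* The counting sets of [S_count], [I_count] and [L_count] are classical sets. *)
Lemma mem_set_pred (T : Type) (b : pred T) u : (u \in [set x | b x]%classic) = b u.
Proof. by apply/idP/idP => [/set_mem|/mem_set]. Qed.

Lemma L_count_dev (p : R) n K (q : 'I_K -> R) (a : graph n) (r : weights n K)
    (x : config n) j l :
  (L_count q a r x j l)%:R - p * (S_count q r x j)%:R * (I_count q r x l)%:R
  = edge_dev p a (class_set q r x sS j) (class_set q r x sI l).
Proof.
set A := class_set q r x sS j; set B := class_set q r x sI l.
pose AB := [pred u : 'I_n * 'I_n | (u.1 \in A) && (u.2 \in B)].
have -> : L_count q a r x j l = #|[pred u | a u && AB u]|.
  by apply: eq_card => u; rewrite mem_set_pred !inE -!andbA.
rewrite -mulrA -natrM.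
have -> : (S_count q r x j * I_count q r x l)%N = #|AB|.
  have -> : S_count q r x j = #|A| by apply: eq_card => i; rewrite mem_set_pred inE.
  have -> : I_count q r x l = #|B| by apply: eq_card => i; rewrite mem_set_pred inE.
  by rewrite -cardsX; apply: eq_card => -[i k]; rewrite finset.in_setX.
rewrite /edge_dev -!sum_indicator mulr_sumr -sumrB.
by apply: eq_bigr => u _; rewrite mulrBr -natrM mulnb andbC mulrC.
Qed.

End Counts.

Local Open Scope classical_set_scope.

Section Asymptotics.
Variable R : realType.

Lemma cut_tail_le_harmonic (eps : R) : 0 < eps ->
  \forall n \near \oo, cut_tail_bound eps n <= harmonic n.
Proof.
move=> eps0; set k := eps ^+ 2 / 8.
have k0 : 0 < k by rewrite /k divr_gt0 // exprn_gt0.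
exists (Num.Def.archi_bound (4 / k)) => // n /= n_ge.
have kn_ge4 : 4 <= k * n%:R.
  have := archi_boundP (ltW (divr_gt0 (ltr0Sn _ 3) k0)).
  have : (Num.Def.archi_bound (4 / k))%:R <= n%:R :> R by rewrite ler_nat.
  by move=> ? ?; rewrite -ler_pdivrMl //; lra.
have two_le_e : 2 <= expR (1 : R) by have := expR_ge1Dx (1 : R); lra.
have pow_le : 2 * (2 ^ (n + n))%:R <= expR ((n + n).+1%:R) :> R.
  rewrite natrX -exprS -[X in expR X]mulr1 expRM_natl.
  by apply: lerXn2r; rewrite ?nnegrE ?expR_ge0.
have exp_le : expR ((n + n).+1%:R - k * (n * n)%:R) <= expR (- n%:R) :> R.
  have n_ge1 : 1 <= n%:R :> R.
    by rewrite ler1n lt0n; apply: contraTneq kn_ge4 => ->; rewrite mulr0 -ltNge.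
  have : 4 * n%:R <= k * n%:R * n%:R :> R by rewrite ler_wpM2r.
  by rewrite ler_expR -addn1 !natrD natrM; lra.
have harmonic_ge : expR (- n%:R) <= harmonic n :> R.
  rewrite /= expRN lef_pV2 ?posrE ?expR_gt0 ?ltr0Sn // -nat1r.
  exact: expR_ge1Dx.
apply: le_trans harmonic_ge; apply: le_trans exp_le.
rewrite /cut_tail_bound mulrCA mulrA expRD -mulNr ler_wpM2r ?expR_ge0 //.
Qed.

End Asymptotics.

Section Measurability.
Context d (Omega : measurableType d) (R : realType).

Lemma measure_bigsetU_le (mu : {measure set Omega -> \bar R})
    (I : Type) (s : seq I) (P : pred I) (F : I -> set Omega) :
  (forall i, measurable (F i)) ->
  (mu (\big[setU/set0]_(i <- s | P i) F i) <= \sum_(i <- s | P i) mu (F i))%E.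
Proof.
move=> mF; elim: s => [|i s IHs]; first by rewrite !big_nil measure0.
rewrite !big_cons; case: ifP => _ //.
apply: le_trans (measureU2 _ (mF i) (bigsetU_measurable _ _)) _ => [k _|].
  exact: mF.
by rewrite leeD2l.
Qed.

Lemma measurable_pred_fiber (C : finType) (f : Omega -> C) (A : pred C) :
  (forall c, measurable [set w | f w = c]) -> measurable [set w | A (f w)].
Proof.
move=> mf; have -> : [set w | A (f w)] = \bigcup_(c in [set c | A c]) [set w | f w = c].
  by apply/seteqP; split => [w Afw | w [c Ac /= ->]] //; exists (f w).
by apply: fin_bigcup_measurable => [|c _]; [exact: finite_finset | exact: mf].
Qed.

(* Right-constant paths are determined on [0, t] by their values at the
   rationals of [0, t] and at t. *)
Lemma measurable_exists_itv (C : finType) (Z : Omega -> R -> C) (A : pred C) (t : R) :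
  (forall u c, measurable [set w | Z w u = c]) ->
  (forall w s, 0 <= s -> exists e : R, 0 < e /\ forall u, s <= u < s + e -> Z w u = Z w s) ->
  0 <= t -> measurable [set w | exists2 u, 0 <= u <= t & A (Z w u)].
Proof.
move=> mZ Zright t0.
pose Zq (r : rat) := if 0 <= (ratr r : R) <= t then [set w | A (Z w (ratr r))] else set0.
have -> : [set w | exists2 u, 0 <= u <= t & A (Z w u)]
    = \bigcup_r Zq r `|` [set w | A (Z w t)].
  apply/seteqP; split => [w [u /andP[u0 ut] Au] | w [[r _]|Atw]]; last 2 first.
  - by rewrite /Zq; case: ifP => // rt Ar; exists (ratr r).
  - by exists t; rewrite ?t0 ?lexx.
  have [<-|u_neq] := eqVneq u t; first by right.
  have [e [e0 Zconst]] := Zright w u u0.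
  have : u < Num.min (u + e) t by rewrite lt_min ltrDl e0 lt_neqAle u_neq.
  case/rat_in_itvoo => r; rewrite in_itv /= lt_min => /andP[ur /andP[rue rt]].
  left; exists r => //; rewrite /Zq (le_trans u0 (ltW ur)) (ltW rt) /=.
  by rewrite Zconst // (ltW ur) rue.
apply: measurableU; last exact: measurable_pred_fiber.
apply: bigcupT_measurable_rat => r; rewrite /Zq.
by case: ifP => // _; exact: measurable_pred_fiber.
Qed.

End Measurability.

Lemma lt_sup_image (R : realType) (T : Type) (S : set T) (f : T -> R) (c : R) :
  S !=set0 -> has_ubound [set f u | u in S] ->
  c < sup [set f u | u in S] <-> exists2 u, S u & c < f u.
Proof.
move=> [u0 Su0] ub; have ne : [set f u | u in S] !=set0 by exists (f u0), u0.
split => [/(sup_gt ne) [_ [u Su <-] c_lt] | [u Su c_lt]]; first by exists u.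
by apply: lt_le_trans c_lt (ub_le_sup ub _); exists u.
Qed.

Section MarginalLaws.
Variable R : realType.

Lemma weights_law_sum1 n K (mu : 'I_K -> R) :
  \sum_j mu j = 1 -> \sum_(r : weights n K) weights_law mu r = 1.
Proof.
move=> mu1; rewrite /weights_law -(bigA_distr_bigA (fun (i : 'I_n) j => mu j)) /=.
by rewrite big1 // => i _; rewrite mu1.
Qed.

Lemma init_law_sum1 n (theta : R) : \sum_(x : config n) init_law theta x = 1.
Proof.
rewrite /init_law -(bigA_distr_bigA (fun (i : 'I_n) (s : 'I_3) =>
  if s == sI then theta else if s == sS then 1 - theta else 0)) /=.
by rewrite big1 // => i _; rewrite !big_ord_recl big_ord0 /= !addr0 subrK.
Qed.

End MarginalLaws.

Section SIRModel.
Variables (R : realType) (d : measure_display) (Omega : measurableType d).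
Variables (P : probability Omega R) (n K : nat) (lam p theta : R) (q mu : 'I_K -> R).
Variables (G : Omega -> graph n) (rho : Omega -> weights n K) (X : Omega -> R -> config n).
Hypothesis model : is_SIR_model P lam p theta q mu G rho X.

Lemma measurable_state_fiber u (z : graph n * weights n K * config n) :
  measurable [set w | (G w, rho w, X w u) = z].
Proof.
case: model => mG [mrho mX] _ _ _; case: z => [[a r] x].
have -> : [set w | (G w, rho w, X w u) = (a, r, x)]
    = [set w | G w = a] `&` [set w | rho w = r] `&` [set w | X w u = x].
  apply/seteqP; split => w /=; first by case=> -> -> ->.
  by case=> -[-> ->] ->.
by apply: measurableI; [apply: measurableI|].
Qed.

Lemma measurable_exists_state (B : pred (graph n * weights n K * config n)) t :
  0 <= t -> measurable [set w | exists2 u, 0 <= u <= t & B (G w, rho w, X w u)].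
Proof.
apply: (measurable_exists_itv (Z := fun w u => (G w, rho w, X w u))).
  exact: measurable_state_fiber.
case: model => _ _ Xright _ _ w s s0; have [e [e0 Xconst]] := Xright w s s0.
by exists e; split => // u su; rewrite Xconst.
Qed.

(* The graph is G(n,p): sum the joint law at time 0 over weights and initial states. *)
Lemma SIR_graph_event_le (A : pred (graph n)) : \sum_j mu j = 1 ->
  (P [set w | A (G w)] <= (\sum_(a | A a) ER_law p a)%:E)%E.
Proof.
case: model => _ _ _ _ law mu1.
pose cyl (z : graph n * weights n K * config n) := [set w | (G w, rho w, X w 0) = z].
have cylE z : P (cyl z) = (ER_law p z.1.1 * weights_law mu z.1.2 * init_law theta z.2)%:E.
  case: z => [[a r] x]; rewrite -[X in X%:E]mulr1 -(law a r x [::]) //.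
  congr (P _); apply/seteqP; split => w; rewrite /cyl /=.
    by case=> -> -> ->.
  by case=> -> -> -> _.
apply: (@le_trans _ _ (P (\big[setU/set0]_(z | A z.1.1) cyl z))).
  apply: le_measure; rewrite ?inE.
  - by apply: measurable_pred_fiber; case: model.
  - by apply: bigsetU_measurable => z _; exact: measurable_state_fiber.
  - move=> w Aw; rewrite -bigcup_seq_cond.
    by exists (G w, rho w, X w 0) => //=; rewrite mem_index_enum.
apply: le_trans (measure_bigsetU_le _ _ _ (measurable_state_fiber 0)) _.
rewrite (eq_bigr _ (fun z _ => cylE z)) sumEFin lee_fin.
pose F (a : graph n) (r : weights n K) (x : config n) : R :=
  if A a then ER_law p a * weights_law mu r * init_law theta x else 0.
rewrite big_mkcond -(pair_bigA _ (fun ar : graph n * weights n K => F ar.1 ar.2)).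
rewrite -(pair_bigA _ (fun a r => \sum_x F a r x)) /=.
rewrite [leRHS]big_mkcond; apply: ler_sum => a _; rewrite /F.
case: ifP => _; last by rewrite !big1.
rewrite -[leRHS]mulr1 -(weights_law_sum1 n mu1) mulr_sumr; apply: ler_sum => r _.
by rewrite -mulr_sumr init_law_sum1 mulr1.
Qed.

Lemma SIR_sup_dev_gt_le (j l : 'I_K) (t eps : R) :
  \sum_j mu j = 1 -> 0 <= p <= 1 -> 0 < eps -> 0 <= t -> (0 < n)%N ->
  (P [set w | (sup [set `| (L_count q (G w) (rho w) (X w u) j l)%:R
                        - p * (S_count q (rho w) (X w u) j)%:R
                            * (I_count q (rho w) (X w u) l)%:R |
                 | u in `[0, t]] / (n ^ 2)%:R > eps)%R]
   <= (cut_tail_bound (Num.min eps 1) n)%:E)%E.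
Proof.
move=> mu1 p01 eps0 t0 n_gt0.
pose dev (z : graph n * weights n K * config n) : R :=
  `| (L_count q z.1.1 z.1.2 z.2 j l)%:R
     - p * (S_count q z.1.2 z.2 j)%:R * (I_count q z.1.2 z.2 l)%:R |.
pose c := eps * (n * n)%:R.
set E := [set w | _].
have ub w : has_ubound [set dev (G w, rho w, X w u) | u in `[0, t]].
  exists (\sum_z dev z) => _ [u _ <-].
  rewrite (bigD1 (G w, rho w, X w u)) //= lerDl.
  by apply: sumr_ge0 => z _; exact: normr_ge0.
have E_exists : E = [set w | exists2 u, 0 <= u <= t & c < dev (G w, rho w, X w u)].
  have ne : `[0, t]%classic !=set0 by exists 0; rewrite /= in_itv /= lexx t0.
  apply/seteqP; split => w; rewrite /E /= ltr_pdivlMr ?ltr0n ?expn_gt0 ?n_gt0 // -mulnn.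
    by case/(lt_sup_image _ ne (ub w)) => u; rewrite /= in_itv /=; exists u.
  by case=> u ut c_lt; apply/(lt_sup_image _ ne (ub w)); exists u; rewrite /= ?in_itv.
have E_sub : E `<=` [set w | cut_dev_gt p c (G w)].
  rewrite E_exists => w [u _ c_lt]; apply/existsP.
  exists (class_set q (rho w) (X w u) sS j, class_set q (rho w) (X w u) sI l).
  by rewrite disjoint_class_set //= -L_count_dev.
apply: (@le_trans _ _ (P [set w | cut_dev_gt p c (G w)])).
  apply: le_measure; rewrite ?inE //.
  - by rewrite E_exists; exact: (measurable_exists_state (fun z => c < dev z) t0).
  - by apply: measurable_pred_fiber; case: model.
apply: le_trans (SIR_graph_event_le _ mu1) _; rewrite lee_fin.
apply: ER_cut_dev_tail => //; first by rewrite lt_min eps0 ltr01 ge_min lexx orbT.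
by rewrite /c ler_wpM2r // ge_min lexx.
Qed.

End SIRModel.

Unset Implicit Arguments.

Theorem corollary3p3 (R : realType) (lam p theta M1 : R) (K : nat)
  (q mu : 'I_K -> R)
  (d : measure_display) (Omega : nat -> measurableType d)
  (P : forall n, probability (Omega n) R)
  (G : forall n, Omega n -> graph n)
  (rho : forall n, Omega n -> weights n K)
  (X : forall n, Omega n -> R -> config n) :
  0 < lam -> 0 < p < 1 -> 0 < theta < 1 ->
  injective q ->
  (forall j, 0 <= q j <= M1) ->
  (forall j, 0 < mu j) -> \sum_j mu j = 1 ->
  (forall n, (0 < n)%N ->
     is_SIR_model (P n) lam p theta q mu (G n) (rho n) (X n)) ->
  forall (j l : 'I_K) (t : R), 0 <= t ->
  forall eps : R, 0 < eps ->
  (fun n => P n [set w |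
      sup [set `| (L_count q (G n w) (rho n w) (X n w u) j l)%:R
                  - p * (S_count q (rho n w) (X n w u) j)%:R
                      * (I_count q (rho n w) (X n w u) l)%:R |
           | u in `[0, t]] / (n ^ 2)%:R > eps]) @ \oo --> 0%E.
Proof.
move=> _ /andP[p0 p1] _ _ _ _ mu1 model j l t t0 eps eps0.
have p01 : 0 <= p <= 1 by rewrite !ltW.
have eps1_gt0 : 0 < Num.min eps 1 by rewrite lt_min eps0 ltr01.
apply: (@squeeze_cvge _ _ _ _ (fun=> 0%E) _ (EFin \o harmonic));
  [|exact: cvg_cst|exact: cvge_harmonic].
near=> n; apply/andP; split; first exact: measure_ge0.
have n_gt0 : (0 < n)%N by near: n; exists 1%N.
apply: le_trans (SIR_sup_dev_gt_le (model n n_gt0) j l mu1 p01 eps0 t0 n_gt0) _.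
by rewrite lee_fin; near: n; exact: cut_tail_le_harmonic eps1_gt0.
Unshelve. all: by end_near.
Qed.
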